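(* An integral smooth character $\theta:L^\times\to\overline{\mathbb Q}_\ell^\times$ lies in strongly general position if and only if its reduction $r_\ell(\theta):L^\times\to\overline{\mathbb F}_\ell^\times$ lies in strongly general position.
   Context: $K$ non-archimedean local field of residue characteristic $p$; $L/K$ unramified of degree $n$ with maximal ideal $\mathfrak p_L$; $\ell\ne p$. $T^1=1+\mathfrak p_L$. A smooth character is in strongly general position if its restriction to $T^1$ has trivial stabilizer in $\mathrm{Gal}(L/K)$ acting by precomposition. $\theta$ is integral if it takes values in $\overline{\mathbb Z}_\ell^\times$; $r_\ell(\theta)$ is its composite with $\overline{\mathbb Z}_\ell\to\overline{\mathbb F}_\ell$. *)

From HB Require Import structures.
From mathcomp Require Import all_boot all_order all_algebra.
Set Implicit Arguments. Unset Strict Implicit. Unset Printing Implicit Defensive.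
Import Order.TTheory GRing.Theory Num.Theory.
Local Open Scope ring_scope.

(* A normalized discrete valuation v : L^x ->> Z (the value at 0 is junk;
   0 is always treated separately, with v 0 = +oo by convention). *)
Definition normalized_dvaluation (L : fieldType) (v : L -> int) : Prop :=
  [/\ forall x y : L, x != 0 -> y != 0 -> v (x * y) = v x + v y,
      forall x y : L, x != 0 -> y != 0 -> x + y != 0 ->
        Num.min (v x) (v y) <= v (x + y)
    & forall n : int, exists x : L, x != 0 /\ v x = n].

(* x \in p_L^m  (for m = 0 this is the valuation ring O_L) *)
Definition in_pow (L : fieldType) (v : L -> int) (m : int) (x : L) : bool :=
  (x == 0) || (m <= v x).

Definition v_complete (L : fieldType) (v : L -> int) : Prop :=
  forall u : nat -> L,
    (forall m : nat, exists N : nat, forall i j : nat, (N <= i)%N -> (N <= j)%N ->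
        in_pow v m%:Z (u i - u j)) ->
    exists l : L, forall m : nat, exists N : nat, forall i : nat, (N <= i)%N ->
        in_pow v m%:Z (u i - l).

Definition finite_residue_char (L : fieldType) (v : L -> int) (p : nat) : Prop :=
  in_pow v 1 (p%:R : L) /\
  exists s : seq L, all (in_pow v 0) s /\
    forall x : L, in_pow v 0 x -> exists2 y, y \in s & in_pow v 1 (x - y).

Definition nonarch_local_field (L : fieldType) (v : L -> int) (p : nat) : Prop :=
  [/\ prime p, normalized_dvaluation v, v_complete v & finite_residue_char v p].

Definition ext_degree (K L : fieldType) (iota : {rmorphism K -> L}) (n : nat) : Prop :=
  exists b : 'I_n -> L, forall x : L,
    exists c : 'I_n -> K, (x = \sum_(i < n) iota (c i) * b i) /\
      forall c' : 'I_n -> K, x = \sum_(i < n) iota (c' i) * b i -> c' =1 c.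

Definition unramified (K L : fieldType) (iota : {rmorphism K -> L})
    (vK : K -> int) (vL : L -> int) : Prop :=
  forall a : K, a != 0 -> vL (iota a) = vK a.

Definition in_Gal (K L : fieldType) (iota : {rmorphism K -> L})
    (s : {rmorphism L -> L}) : Prop :=
  bijective s /\ forall a : K, s (iota a) = iota a.

Definition in_T1 (L : fieldType) (v : L -> int) (x : L) : bool := in_pow v 1 (x - 1).

(* a character L^x -> M^x (values on 0 are irrelevant) *)
Definition character (L M : fieldType) (chi : L -> M) : Prop :=
  (forall x y : L, x != 0 -> y != 0 -> chi (x * y) = chi x * chi y) /\
  (forall x : L, x != 0 -> chi x != 0).

(* smooth: the kernel is open, i.e. contains some U_L^m = 1 + p_L^m *)
Definition smooth_character (L M : fieldType) (v : L -> int) (chi : L -> M) : Prop :=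
  character chi /\
  exists m : nat, forall x : L, x != 0 -> in_pow v m%:Z (x - 1) -> chi x = 1.

Definition strongly_general_position (K L M : fieldType)
    (iota : {rmorphism K -> L}) (v : L -> int) (chi : L -> M) : Prop :=
  forall s : {rmorphism L -> L}, in_Gal iota s ->
    (forall x : L, in_T1 v x -> chi (s x) = chi x) -> s =1 id.

(* Abstract model of (Qlbar, Zlbar, r_l : Zlbar ->> Flbar):
   C algebraically closed of characteristic 0, O a valuation ring of C,
   r : O ->> F a surjective ring morphism whose kernel is the maximal
   ideal of O, F algebraically closed of characteristic l. *)
Definition ell_adic_coeffs (C F : closedFieldType) (O : {pred C})
    (r : C -> F) (ell : nat) : Prop :=
  [/\ [pchar C] =i pred0, ell \in [pchar F],
      [/\ 1 \in O, forall x y, x \in O -> y \in O -> x - y \in O,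
          forall x y, x \in O -> y \in O -> x * y \in O
        & forall x : C, x != 0 -> (x \in O) || (x^-1 \in O)],
      [/\ r 1 = 1, forall x y, x \in O -> y \in O -> r (x + y) = r x + r y
        & forall x y, x \in O -> y \in O -> r (x * y) = r x * r y]
    &
      (forall z : F, exists2 x, x \in O & r x = z) /\
      (forall x, x \in O -> (r x == 0) = ((x == 0) || (x^-1 \notin O)))].

Definition integral_character (L C : fieldType) (O : {pred C}) (chi : L -> C) : Prop :=
  forall x : L, x != 0 -> (chi x \in O) && ((chi x)^-1 \in O).

(* If s in Gal(L/K) fixes r_l o theta on T^1 then it fixes theta there. Indeed theta is
   trivial on 1 + p_L^m, and x^(p^k) lies in 1 + p_L^(k+1) for x in T^1, so theta(x) is a
   root of unity of p-power order; as s is K-linear on the finite-dimensional space L over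
   the complete field K, it is continuous, so the same holds for theta(s x) with a common
   exponent. Reduction is injective on roots of unity of order prime to l, and l <> p.
   The converse implication is immediate. *)

From HB Require Import structures.
From mathcomp Require Import all_boot all_order all_algebra zify.
From Stdlib Require Import Classical IndefiniteDescription.
Set Implicit Arguments. Unset Strict Implicit. Unset Printing Implicit Defensive.
Import Order.TTheory GRing.Theory Num.Theory.
Local Open Scope ring_scope.

Section Valuation.

Variables (L : fieldType) (v : L -> int).

Lemma in_pow0 m : in_pow v m 0.
Proof. by rewrite /in_pow eqxx. Qed.

Lemma in_pow_self x : in_pow v (v x) x.
Proof. by rewrite /in_pow lexx orbT. Qed.

Lemma in_pow_le a b x : a <= b -> in_pow v b x -> in_pow v a x.
Proof. by rewrite /in_pow => ab /orP[->//|bv]; rewrite (le_trans ab bv) orbT. Qed.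

Lemma in_pow_eq0 x : (forall m : nat, in_pow v m%:Z x) -> x = 0.
Proof. by move=> x_small; apply/eqP; move: (x_small `|v x|.+1); rewrite /in_pow; lia. Qed.

Hypothesis hv : normalized_dvaluation v.

Lemma dval1 : v 1 = 0.
Proof. by case: hv => vM _ _; move: (vM 1 1 (oner_neq0 _) (oner_neq0 _)); rewrite mulr1; lia. Qed.

Lemma dvalN x : x != 0 -> v (- x) = v x.
Proof.
case: hv => vM _ _ x0; have N1_neq0 : (-1 : L) != 0 by rewrite oppr_eq0 oner_neq0.
have vN1 : v (-1) = 0.
  by move: (vM _ _ N1_neq0 N1_neq0); rewrite mulrNN mulr1 dval1; lia.
by rewrite -mulN1r vM // vN1 add0r.
Qed.

Lemma dvalV x : x != 0 -> v x^-1 = - v x.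
Proof.
by case: hv => vM _ _ x0; move: (vM _ _ x0 (invr_neq0 x0)); rewrite mulfV // dval1; lia.
Qed.

Lemma in_powN m x : in_pow v m x -> in_pow v m (- x).
Proof. by rewrite /in_pow oppr_eq0; case: (eqVneq x 0) => //= x0; rewrite dvalN. Qed.

Lemma in_powD m x y : in_pow v m x -> in_pow v m y -> in_pow v m (x + y).
Proof.
rewrite /in_pow; have [->|x0] := eqVneq x 0; first by rewrite add0r.
have [->|y0] := eqVneq y 0; first by rewrite addr0 (negPf x0).
have [//|xy0 /= mx my] := eqVneq (x + y) 0.
by case: hv => _ vU _; apply: le_trans (vU _ _ x0 y0 xy0); rewrite le_min mx my.
Qed.

Lemma in_powB m x y : in_pow v m x -> in_pow v m y -> in_pow v m (x - y).
Proof. by move=> mx my; rewrite in_powD ?in_powN. Qed.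

Lemma in_powM a b x y : in_pow v a x -> in_pow v b y -> in_pow v (a + b) (x * y).
Proof.
rewrite /in_pow mulf_eq0; have [//|x0] := eqVneq x 0; have [//|y0 /= ax by'] := eqVneq y 0.
by case: hv => vM _ _; rewrite vM // lerD.
Qed.

Lemma in_pow_sum m (I : Type) (r : seq I) (P : pred I) (F : I -> L) :
  (forall i, P i -> in_pow v m (F i)) -> in_pow v m (\sum_(i <- r | P i) F i).
Proof. by move=> mF; apply: (big_ind (in_pow v m)) => //; [apply: in_pow0 | apply: in_powD]. Qed.

Lemma in_pow1 : in_pow v 0 1.
Proof. by rewrite /in_pow dval1 lexx orbT. Qed.

Lemma in_pow_nat k : in_pow v 0 k%:R.
Proof. by elim: k => [|k IHk]; rewrite ?in_pow0 // mulrS in_powD ?in_pow1. Qed.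

Lemma in_powX a x k : in_pow v a x -> in_pow v (a *+ k) (x ^+ k).
Proof.
by move=> ax; elim: k => [|k IHk]; rewrite ?in_pow1 // exprSr mulrSr in_powM.
Qed.

Lemma in_T1_neq0 x : in_T1 v x -> x != 0.
Proof.
rewrite /in_T1 /in_pow; have [->|//] := eqVneq x 0.
by rewrite sub0r oppr_eq0 oner_eq0 /= dvalN ?oner_neq0 // dval1.
Qed.

Variable p : nat.
Hypotheses (p_prime : prime p) (p_in_maxideal : in_pow v 1 p%:R).

(* Expand ((y - 1) + 1)^p: p divides the middle binomial coefficients, and p >= 2. *)
Lemma in_pow_expp_sub1 a y : 1 <= a -> in_pow v a (y - 1) -> in_pow v (a + 1) (y ^+ p - 1).
Proof.
move=> a_ge1 ay; have -> : y = (y - 1) + 1 by rewrite subrK.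
rewrite exprD1n big_ord_recl /= expr0 bin0 mulr1n [1 + _]addrC addrK.
apply: in_pow_sum => i _; rewrite /bump /= add1n.
have ayi := in_powX i.+1 ay.
have [i_lt_p|p_le_i] := ltnP i.+1 p.
  have /dvdnP[q ->] := prime_dvd_bin p_prime (i_lt_p : (0 < i.+1 < p)%N).
  rewrite -mulr_natr natrM mulrA; apply: (@in_pow_le _ ((a *+ i.+1 + 0) + 1)).
    have : 0 <= a *+ i by apply: mulrn_wge0; lia.
    by rewrite addr0 lerD2r mulrS; lia.
  by rewrite in_powM // in_powM // in_pow_nat.
have ip : i.+1 = p by apply/eqP; rewrite eqn_leq p_le_i andbT ltn_ord.
rewrite ip binn mulr1n in ayi *; apply: in_pow_le ayi; have := prime_gt1 p_prime.
by rewrite -mulr_natr; nia.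
Qed.

Lemma in_T1_expn x k : in_T1 v x -> in_pow v k.+1%:Z (x ^+ (p ^ k) - 1).
Proof.
move=> xT1; elim: k => [|k IHk]; first by rewrite expn0 expr1.
rewrite expnSr exprM; apply: (@in_pow_le _ (k.+1%:Z + 1)); first lia.
by apply: in_pow_expp_sub1 => //; lia.
Qed.

End Valuation.

Section Characters.

Variables (L M : fieldType) (v : L -> int) (chi : L -> M).

Lemma character1 : character chi -> chi 1 = 1.
Proof.
case=> chiM chi_neq0; have chi1_neq0 := chi_neq0 _ (oner_neq0 L).
by apply: (mulIf chi1_neq0); rewrite mul1r -chiM ?oner_neq0 // mulr1.
Qed.

Lemma characterX x k : character chi -> x != 0 -> chi (x ^+ k) = chi x ^+ k.
Proof.
move=> chi_char x0; elim: k => [|k IHk]; first by rewrite !expr0 character1.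
by rewrite !exprS (proj1 chi_char) ?expf_neq0 // IHk.
Qed.

Lemma smooth_character_comp (s : {rmorphism L -> L}) :
  (forall m : int, exists N : nat, forall w, in_pow v N%:Z w -> in_pow v m (s w)) ->
  smooth_character v chi -> smooth_character v (chi \o s).
Proof.
move=> s_cont [[chiM chi_neq0] [m chi_m]]; split.
  split=> [x y x0 y0|x x0] /=; last by rewrite chi_neq0 ?fmorph_eq0.
  by rewrite rmorphM chiM ?fmorph_eq0.
have [N sN] := s_cont m; exists N => x x0 xN /=.
by rewrite chi_m ?fmorph_eq0 // -(rmorph1 s) -rmorphB sN.
Qed.

Lemma smooth_character_T1_torsion p :
  normalized_dvaluation v -> prime p -> in_pow v 1 p%:R ->
  smooth_character v chi ->
  exists k0, forall k, (k0 <= k)%N -> forall x, in_T1 v x -> chi x ^+ (p ^ k) = 1.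
Proof.
move=> hv p_prime p_v [chi_char [m chi_m]]; exists m => k m_le_k x xT1.
have x0 := in_T1_neq0 hv xT1.
rewrite -characterX // chi_m ?expf_neq0 //.
by apply: in_pow_le (in_T1_expn hv p_prime p_v k xT1); lia.
Qed.

End Characters.

Section Reduction.

Variables (C : idomainType) (F : nzRingType) (O : {pred C}) (r : C -> F) (ell : nat).
Hypotheses (O1 : 1 \in O) (OB : forall x y, x \in O -> y \in O -> x - y \in O)
  (OM : forall x y, x \in O -> y \in O -> x * y \in O).
Hypotheses (r1 : r 1 = 1) (rD : forall x y, x \in O -> y \in O -> r (x + y) = r x + r y)
  (rM : forall x y, x \in O -> y \in O -> r (x * y) = r x * r y).
Hypothesis ell_char : ell \in [pchar F].

Let O0 : 0 \in O.
Proof. by rewrite -(subrr 1) OB. Qed.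

Let OD x y : x \in O -> y \in O -> x + y \in O.
Proof. by move=> Ox Oy; rewrite -[y]opprK OB // -sub0r OB. Qed.

Let OX x k : x \in O -> x ^+ k \in O.
Proof. by move=> Ox; elim: k => [|k IHk]; rewrite ?expr0 // exprS OM. Qed.

Let r0 : r 0 = 0.
Proof. by apply: (@addrI _ (r 0)); rewrite -rD // !addr0. Qed.

Let rX x k : x \in O -> r (x ^+ k) = r x ^+ k.
Proof. by move=> Ox; elim: k => [|k IHk]; rewrite ?expr0 // !exprS rM ?OX // IHk. Qed.

Let r_sum I (s : seq I) (G : I -> C) :
  (forall i, G i \in O) -> r (\sum_(i <- s) G i) = \sum_(i <- s) r (G i).
Proof.
move=> OG; suff [] : (\sum_(i <- s) G i \in O) /\ r (\sum_(i <- s) G i) = \sum_(i <- s) r (G i).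
  by [].
apply: (big_ind2 (fun x y => x \in O /\ r x = y)) => [|x1 x2 y1 y2 [Ox1 <-] [Oy1 <-]|i _] //.
by rewrite OD // rD.
Qed.

(* z is a root of 1 + z + ... + z^(N-1), which r sends to N. *)
Lemma reduction_eq1_root_of_unity z N :
  z \in O -> z ^+ N = 1 -> r z = 1 -> ~~ (ell %| N)%N -> z = 1.
Proof.
move=> Oz zN rz ell_N; apply/eqP; apply: contraNT ell_N => z_neq1.
have geo0 : \sum_(i < N) z ^+ i = 0.
  apply/eqP; move: (subrX1 z N); rewrite zN subrr => /esym/eqP.
  by rewrite mulf_eq0 subr_eq0 (negPf z_neq1).
rewrite (dvdn_pcharf ell_char); move: (congr1 r geo0).
rewrite r_sum => [|i]; last exact: OX.
rewrite r0 (eq_bigr (fun _ => 1)) => [<-|i _]; last by rewrite rX // rz expr1n.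
by rewrite sumr_const card_ord.
Qed.

Lemma reduction_inj_roots_of_unity a b N :
  a \in O -> b \in O -> a ^+ N = 1 -> b ^+ N = 1 -> r a = r b -> ~~ (ell %| N)%N -> a = b.
Proof.
move=> Oa Ob aN bN rab ell_N; have N_gt0 : (0 < N)%N by case: N ell_N {aN bN}; rewrite ?dvdn0.
have bN1 : b ^+ N.-1 * b = 1 by rewrite -exprSr prednK.
suff ab1 : a * b ^+ N.-1 = 1 by rewrite -[a]mulr1 -bN1 mulrA ab1 mul1r.
apply: (reduction_eq1_root_of_unity _ _ _ ell_N); first by rewrite OM ?OX.
  by rewrite exprMn -exprM mulnC exprM bN expr1n mulr1 aN.
by rewrite rM ?OX // rab -rM ?OX // mulrC bN1.
Qed.

End Reduction.

Lemma eventually_forall_fin (T : finType) (P : T -> nat -> Prop) :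
  (forall t, exists N, forall j, (N <= j)%N -> P t j) ->
  exists N, forall j, (N <= j)%N -> forall t, P t j.
Proof.
move=> evP; have [N PN] := fin_all_exists evP.
by exists (\max_t N t)%N => j Nj t; apply: PN; apply: leq_trans Nj; apply: leq_bigmax.
Qed.

Definition extend_at (T : Type) k (i : 'I_k.+1) (c : 'I_k -> T) (x : T) (j : 'I_k.+1) : T :=
  if unlift i j is Some t then c t else x.

Section LinearCombinations.

Variables (K L : fieldType) (iota : {rmorphism K -> L}) (vK : K -> int) (vL : L -> int).

Definition lincomb k (b : 'I_k -> L) (c : 'I_k -> K) : L := \sum_(t < k) iota (c t) * b t.

Definition lin_indep k (b : 'I_k -> L) : Prop :=
  forall c : 'I_k -> K, lincomb b c = 0 -> forall t, c t = 0.

Definition coords_continuous k (b : 'I_k -> L) : Prop :=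
  forall m : int, exists M : nat, forall c : 'I_k -> K,
    in_pow vL M%:Z (lincomb b c) -> forall t, in_pow vK m (c t).

Lemma lincombB k (b : 'I_k -> L) c c' :
  lincomb b (fun t => c t - c' t) = lincomb b c - lincomb b c'.
Proof. by rewrite /lincomb -sumrB; apply: eq_bigr => t _; rewrite rmorphB mulrBl. Qed.

Lemma lincombN k (b : 'I_k -> L) c : lincomb b (fun t => - c t) = - lincomb b c.
Proof. by rewrite /lincomb -sumrN; apply: eq_bigr => t _; rewrite rmorphN mulNr. Qed.

Lemma lincombZ k (b : 'I_k -> L) a c :
  lincomb b (fun t => a * c t) = iota a * lincomb b c.
Proof. by rewrite /lincomb mulr_sumr; apply: eq_bigr => t _; rewrite rmorphM mulrA. Qed.

Lemma lincomb_lift k (b : 'I_k.+1 -> L) c i :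
  lincomb b c = iota (c i) * b i + lincomb (b \o lift i) (c \o lift i).
Proof. by rewrite /lincomb (bigD1_ord i). Qed.

Lemma lincomb_extend_at k (b : 'I_k.+1 -> L) i c x :
  lincomb b (extend_at i c x) = iota x * b i + lincomb (b \o lift i) c.
Proof.
rewrite (lincomb_lift _ _ i) /extend_at unlift_none; congr (_ + _).
by apply: eq_bigr => t _; rewrite /= liftK.
Qed.

Lemma lincomb_rmorph (s : {rmorphism L -> L}) k (b : 'I_k -> L) c :
  (forall a, s (iota a) = iota a) -> s (lincomb b c) = lincomb (s \o b) c.
Proof.
by move=> s_iota; rewrite rmorph_sum; apply: eq_bigr => t _; rewrite rmorphM s_iota.
Qed.

Lemma lin_indep_lift k (b : 'I_k.+1 -> L) i : lin_indep b -> lin_indep (b \o lift i).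
Proof.
move=> b_indep c bc0 t; have := b_indep (extend_at i c 0).
rewrite lincomb_extend_at bc0 rmorph0 mul0r addr0 => /(_ erefl (lift i t)).
by rewrite /extend_at liftK.
Qed.

Lemma ext_degree_basis n :
  ext_degree iota n -> exists b : 'I_n -> L, lin_indep b /\ forall x, exists c, x = lincomb b c.
Proof.
case=> b b_basis; exists b; split=> [c bc0 t|x]; last first.
  by have [c [xc _]] := b_basis x; exists c.
have [c0 [_ c0_uniq]] := b_basis 0.
rewrite (c0_uniq c (esym bc0)) -(c0_uniq (fun _ => 0)) //.
by rewrite big1 // => j _; rewrite rmorph0 mul0r.
Qed.

Hypotheses (hvK : normalized_dvaluation vK) (hvL : normalized_dvaluation vL)
  (iota_unram : unramified iota vK vL).

Lemma in_pow_iota m a : in_pow vK m a -> in_pow vL m (iota a).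
Proof.
rewrite /in_pow; have [->|a0] := eqVneq a 0; first by rewrite rmorph0 eqxx.
by rewrite iota_unram // fmorph_eq0 (negPf a0).
Qed.

Lemma lincomb_continuous k (b : 'I_k -> L) (m : int) :
  exists M : int, forall c, (forall t, in_pow vK M (c t)) -> in_pow vL m (lincomb b c).
Proof.
pose B := (\max_t `|vL (b t)|)%N; exists (m + B%:Z) => c c_small.
apply: (in_pow_sum hvL) => t _; apply: (@in_pow_le _ _ _ (m + B%:Z + - B%:Z)); first lia.
apply: (in_powM hvL); first exact: in_pow_iota.
apply: in_pow_le (in_pow_self vL (b t)).
by have := @leq_bigmax _ (fun t => `|vL (b t)|%N) t; lia.
Qed.

Lemma lincomb_rescale k (b : 'I_k -> L) c i (m : int) (M : nat) :
  in_pow vL (M + `|m|)%N%:Z (lincomb b c) -> ~~ in_pow vK m (c i) ->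
  exists2 d : 'I_k -> K, d i = 1 & in_pow vL M%:Z (lincomb b d).
Proof.
move=> bc_small ci_big; have ci0 : c i != 0 by apply: contraNneq ci_big => ->; apply: in_pow0.
have vci : vK (c i) < m by move: ci_big; rewrite /in_pow (negPf ci0) /= -ltNge.
exists (fun t => (c i)^-1 * c t); first by rewrite mulVf.
rewrite lincombZ; apply: (@in_pow_le _ _ _ (vK (c i)^-1 + (M + `|m|)%N%:Z)).
  by rewrite (dvalV hvK) //; lia.
by apply: (in_powM hvL _ bc_small); apply: in_pow_iota; apply: in_pow_self.
Qed.

Hypothesis vK_complete : v_complete vK.

Lemma lincomb_closed k (b : 'I_k -> L) y (e : nat -> 'I_k -> K) :
  coords_continuous b -> (forall j : nat, in_pow vL j%:Z (y - lincomb b (e j))) ->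
  exists f, y = lincomb b f.
Proof.
move=> b_coords y_lim.
have e_cauchy t : exists l, forall m : nat, exists N : nat, forall j, (N <= j)%N ->
    in_pow vK m%:Z (e j t - l).
  have [|l e_lim] := vK_complete (u := fun j => e j t); last by exists l.
  move=> m; have [M bM] := b_coords m%:Z.
  exists M => j j' Mj Mj'; apply: (bM (fun t => e j t - e j' t)).
  have -> : lincomb b (fun t => e j t - e j' t) = (y - lincomb b (e j')) - (y - lincomb b (e j)).
    by rewrite lincombB opprB [RHS]addrC addrA subrK.
  by apply: (in_powB hvL); apply: in_pow_le (y_lim _); lia.
have [f e_to_f] := fin_all_exists e_cauchy; exists f.
apply/eqP; rewrite -subr_eq0; apply/eqP/(in_pow_eq0 (v := vL)) => m.
have [M bM] := lincomb_continuous b m%:Z.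
have [N eN] := eventually_forall_fin (fun t => e_to_f t `|M|%N).
pose j := maxn N m.
rewrite -[y](subrK (lincomb b (e j))) -addrA -lincombB; apply: (in_powD hvL).
  by apply: in_pow_le (y_lim j); rewrite lez_nat leq_maxr.
by apply: bM => t; apply: in_pow_le (eN j (leq_maxl _ _) t); lia.
Qed.

(* Induction on k: an unbounded i-th coordinate would, after rescaling it to 1, exhibit
   b i as a limit of combinations of the other vectors, whose span is closed by induction. *)
Lemma coords_continuous_lin_indep k (b : 'I_k -> L) : lin_indep b -> coords_continuous b.
Proof.
elim: k b => [|k IHk] b b_indep m; first by exists 0%N => c _ [].
suff coord_i i : exists M : nat, forall c, in_pow vL M%:Z (lincomb b c) -> in_pow vK m (c i).
  have [|M bM] := @eventually_forall_fin _ (fun i M => forall c,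
      in_pow vL M%:Z (lincomb b c) -> in_pow vK m (c i)).
    move=> i; have [M bM] := coord_i i.
    by exists M => j Mj c bc; apply: bM; apply: in_pow_le bc; lia.
  by exists M => c bc t; apply: bM (leqnn M) t c bc.
apply: NNPP => no_bound.
have rescaled j : exists d : 'I_k.+1 -> K, d i = 1 /\ in_pow vL j%:Z (lincomb b d).
  apply: NNPP => no_d; apply: no_bound; exists (j + `|m|)%N => c bc.
  apply/negPn/negP => ci_big; have [d di1 bd] := lincomb_rescale bc ci_big.
  by apply: no_d; exists d.
have [d d_prop] := functional_choice _ rescaled.
have [f bi_span] : exists f, b i = lincomb (b \o lift i) f.
  apply: (lincomb_closed (e := fun j t => - d j (lift i t))).
    exact/IHk/lin_indep_lift.
  move=> j; rewrite lincombN opprK -[b i]mul1r -(rmorph1 iota) -(proj1 (d_prop j)).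
  by rewrite -lincomb_lift; apply: (proj2 (d_prop j)).
have := b_indep (extend_at i f (-1)); rewrite lincomb_extend_at -bi_span rmorphN1 mulN1r.
by move=> /(_ (addNr _) i); rewrite /extend_at unlift_none => /eqP; rewrite oppr_eq0 oner_eq0.
Qed.

Lemma Gal_continuous n (s : {rmorphism L -> L}) :
  ext_degree iota n -> (forall a, s (iota a) = iota a) ->
  forall m : int, exists M : nat, forall w, in_pow vL M%:Z w -> in_pow vL m (s w).
Proof.
move=> L_deg s_iota m; have [b [b_indep b_span]] := ext_degree_basis L_deg.
have [M0 sbM0] := lincomb_continuous (s \o b) m.
have [M bM] := coords_continuous_lin_indep b_indep M0.
exists M => w; have [c ->] := b_span w.
by rewrite lincomb_rmorph // => bc; apply: sbM0; apply: bM.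
Qed.

End LinearCombinations.

Theorem lemma3p7 (p ell n : nat) (K L : fieldType) (iota : {rmorphism K -> L})
    (vK : K -> int) (vL : L -> int)
    (C F : closedFieldType) (O : {pred C}) (r : C -> F) (theta : L -> C) :
  nonarch_local_field vK p -> nonarch_local_field vL p ->
  ext_degree iota n -> unramified iota vK vL ->
  prime ell -> ell != p -> ell_adic_coeffs O r ell ->
  smooth_character vL theta -> integral_character O theta ->
  (strongly_general_position iota vL theta <->
   strongly_general_position iota vL (fun x => r (theta x))).
Proof.
move=> [p_prime hvK vK_complete _] [_ hvL _ [p_vL _]] L_deg iota_unram ell_prime ell_neq_p.
case=> _ ell_char [O1 OB OM _] [r1 rD rM] _ theta_smooth theta_int.
split=> theta_sgp s s_Gal s_fix; apply: (theta_sgp s s_Gal) => x xT1; last by rewrite /= s_fix.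
have s_cont := Gal_continuous hvK hvL iota_unram vK_complete L_deg (proj2 s_Gal).
have [k1 theta_tors] := smooth_character_T1_torsion hvL p_prime p_vL theta_smooth.
have [k2 theta_s_tors] := smooth_character_T1_torsion hvL p_prime p_vL
  (smooth_character_comp s_cont theta_smooth).
pose k := maxn k1 k2; have x0 := in_T1_neq0 hvL xT1.
have sx0 : s x != 0 by rewrite fmorph_eq0.
apply: (reduction_inj_roots_of_unity O1 OB OM r1 rD rM ell_char (N := p ^ k)).
- by have /andP[] := theta_int _ sx0.
- by have /andP[] := theta_int _ x0.
- exact: theta_s_tors (leq_maxr _ _) _ xT1.
- exact: theta_tors (leq_maxl _ _) _ xT1.
- exact: s_fix.
- by rewrite Euclid_dvdX // dvdn_prime2 // (negPf ell_neq_p).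
Qed.
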